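(* Let $X$ be a finite rack. There exists $N_0$ (depending on $X$) such that for every $N\ge N_0$ and every $w\in S_X$, left multiplication by $w$ is an injective map from $S_X^*(N)$ to itself.
   Context: A rack is a set $X$ with an operation $x^y$ such that $x\mapsto x^y$ is bijective for each $y$ and $(z^x)^y=(z^y)^{x^y}$. Its connected components $C_1,\dots,C_k$ are the classes of the smallest equivalence relation with $x\sim x^y$. $B_n$ acts on $X^n$ from the right by $(\dots,x_i,x_{i+1},\dots)^{\sigma_i}=(\dots,x_{i+1},x_i^{x_{i+1}},\dots)$. The structure semigroup is $S_X=\bigsqcup_{n\ge1}X^n/B_n$ with multiplication given by concatenation of representatives. For nonnegative $n_1,\dots,n_k$ with sum $n$, $X^*(n_1,\dots,n_k)$ is the set of $(x_1,\dots,x_n)\in X^n$ having exactly $n_j$ entries in $C_j$ for each $j$ and whose entries generate $X$ (lie in no proper subset closed under $x^y$). $S_X^*(N)=\bigcup_{n_1,\dots,n_k\ge N}X^*(n_1,\dots,n_k)/B_n$, which is an ideal of $S_X$. *)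

From mathcomp Require Import all_boot.
From Stdlib Require Import Relations.
Set Implicit Arguments. Unset Strict Implicit. Unset Printing Implicit Defensive.

Section Rack.
Variables (X : finType) (op : X -> X -> X).
(* op x y  stands for  x^y. *)

Definition is_rack : Prop :=
  (forall y, bijective (fun x => op x y)) /\
  (forall x y z, op (op z x) y = op (op z y) (op x y)).

Definition rack_step : rel X :=
  fun a b => [exists z, (b == op a z) || (a == op b z)].
Definition same_comp (x y : X) : bool := connect rack_step x y.

(* Right action of the braid generators on tuples:
   (.., x_i, x_{i+1}, ..)^{sigma_i} = (.., x_{i+1}, x_i^{x_{i+1}}, ..). *)
Inductive braid_step : seq X -> seq X -> Prop :=
| bstep_here x y s : braid_step [:: x, y & s] [:: y, op x y & s]
| bstep_cons x s t : braid_step s t -> braid_step (x :: s) (x :: t).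

(* Two tuples lie in the same B_n-orbit: equivalence closure of the
   generator moves (this is the orbit relation of the group B_n). *)
Definition braid_equiv : seq X -> seq X -> Prop :=
  clos_refl_sym_trans (seq X) braid_step.

Definition generates (s : seq X) : Prop :=
  forall A : {set X}, {subset s <= A} ->
    (forall a b, a \in A -> b \in A -> op a b \in A) -> A = [set: X].

(* Tuple s represents an element of S_X^*(N): s has length >= 1, each
   connected component C_j contains n_j >= N of its entries, and the
   entries generate X. (Each component is the class of some x : X.) *)
Definition in_Sstar (N : nat) (s : seq X) : Prop :=
  0 < size s /\
  (forall x : X, N <= count (same_comp x) s) /\
  generates s.

End Rack.

From mathcomp Require Import all_boot boolp zify.
From Stdlib Require Import Relations.
Set Implicit Arguments. Unset Strict Implicit. Unset Printing Implicit Defensive.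

(* Call x a front letter of a tuple t if t is braid equivalent to x :: s with s still
   generating X.  Braid moves show that the front letters of t are stable under the action
   of every letter lying behind two copies of all of them; being stable under a generating
   set, they form a union of connected components.  Every component meets them: by
   pigeonhole some v of the component occurs three times in t, and then v^v is a front
   letter.  An induction on the number of front letters, peeling off short prefixes, shows
   that every letter is a front letter once every component occurs often enough in t.

   For such u, prepending x therefore maps the orbits of generating tuples with the
   component counts of u onto those with the counts of x :: u, so the number of these
   orbits never increases when counts grow.  Its minimum over well-spread generating tuples
   is thus attained at every tuple with large enough counts, where prepending x is a
   surjection between finite sets of equal size, hence injective. *)

Lemma count_mem_pigeonhole (T : finType) (P : pred T) (s : seq T) n :
  n * #|T| < count P s -> exists2 v, P v & n < count_mem v s.
Proof.
have count_sum : count P s = \sum_(v | P v) count_mem v s.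
  elim: s => [|x s IHs] /=; first by rewrite big1.
  rewrite IHs big_split /=; congr (_ + _).
  case Px: (P x).
    by rewrite (bigD1 x) //= eqxx big1 // => v /andP [_ /negbTE]; rewrite eq_sym => ->.
  by rewrite big1 // => v Pv; apply/eqP; rewrite eqb0; apply: contraFN Px => /eqP->.
move=> lt_ns; apply/exists_inP; apply: contraLR lt_ns => /exists_inPn small.
rewrite -leqNgt count_sum (@leq_trans (\sum_(v in P) n)) //.
  by apply: leq_sum => v Pv; rewrite leqNgt small.
by rewrite sum_nat_const mulnC leq_mul2l max_card orbT.
Qed.

Lemma count_mem_split (T : eqType) (v : T) s n : n < count_mem v s ->
  exists s1 s2, s = s1 ++ v :: s2 /\ n <= count_mem v s2.
Proof.
elim: s => //= x s IHs; case: eqP => [->|_] /= lt_n; first by exists [::], s.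
by have [s1 [s2 [-> ?]]] := IHs lt_n; exists (x :: s1), s2.
Qed.

Lemma mem_split (T : eqType) (x : T) s : x \in s -> exists s1 s2, s = s1 ++ x :: s2.
Proof. by case/splitPr=> s1 s2; exists s1, s2. Qed.

Lemma size_sum_roots (T : finType) (e : rel T) (s : seq T) : connect_sym e ->
  size s = \sum_(r in roots e) count (connect e r) s.
Proof.
move=> sym_e; elim: s => [|y s IHs] /=; first by rewrite big1.
rewrite big_split /= -IHs -add1n; congr (_ + _).
rewrite (bigD1 (root e y)) /=; last exact: roots_root.
rewrite sym_e connect_root big1 // => r /andP [/eqP rr nr].
by apply/eqP; rewrite eqb0; apply: contra nr => /(rootP sym_e) <-; rewrite rr.
Qed.

Section RackBraids.
Variables (X : finType) (op : X -> X -> X).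

Local Notation be := (braid_equiv op).
Local Notation gen := (generates op).

Lemma braid_refl s : be s s. Proof. exact: rst_refl. Qed.
Lemma braid_sym s t : be s t -> be t s. Proof. exact: rst_sym. Qed.
Lemma braid_trans s t u : be s t -> be t u -> be s u. Proof. exact: rst_trans. Qed.

Lemma braid_swap x y s : be [:: x, y & s] [:: y, op x y & s].
Proof. by apply: rst_step; constructor. Qed.

Lemma braid_cons x s t : be s t -> be (x :: s) (x :: t).
Proof.
elim=> [a b ab | a | a b _ | a b c _ IHab _ IHbc]; last exact: braid_trans IHab IHbc.
- by apply: rst_step; constructor.
- exact: braid_refl.
- exact: braid_sym.
Qed.

Lemma braid_catl w s t : be s t -> be (w ++ s) (w ++ t).
Proof. by elim: w => //= x w IHw /IHw; apply: braid_cons. Qed.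

Lemma braid_move_left B y s : be (B ++ y :: s) (y :: map (op^~ y) B ++ s).
Proof.
elim: B => [|b B IHB] /=; first exact: braid_refl.
exact: braid_trans (braid_cons b IHB) (braid_swap _ _ _).
Qed.

Lemma braid_size s t : be s t -> size s = size t.
Proof.
elim=> [a b | a | a b _ -> | a b c _ -> _ ->] //.
by elim=> //= x a' b' _ ->.
Qed.

Lemma connect_sym_rack_step : connect_sym (rack_step op).
Proof.
apply: sym_connect_sym => a b.
by apply/existsP/existsP => -[z]; exists z; rewrite orbC.
Qed.

Lemma same_comp_refl x : same_comp op x x.
Proof. exact: connect0. Qed.

Lemma same_comp_sym x y : same_comp op x y = same_comp op y x.
Proof. exact: connect_sym_rack_step. Qed.

Lemma same_comp_trans x y z : same_comp op x y -> same_comp op y z -> same_comp op x z.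
Proof. exact: connect_trans. Qed.

Lemma same_comp_act x z : same_comp op x (op x z).
Proof. by apply: connect1; apply/existsP; exists z; rewrite eqxx. Qed.

Lemma same_comp_actr y x z : same_comp op y (op x z) = same_comp op y x.
Proof.
apply/idP/idP => [|yx]; last exact: same_comp_trans yx (same_comp_act x z).
by move/same_comp_trans; apply; rewrite same_comp_sym same_comp_act.
Qed.

Lemma count_same_comp x y s : same_comp op x y ->
  count (same_comp op x) s = count (same_comp op y) s.
Proof.
move=> xy; apply: eq_count => z; apply/idP/idP; last exact: same_comp_trans.
by apply: same_comp_trans; rewrite same_comp_sym.
Qed.

Lemma braid_count y s t : be s t ->
  count (same_comp op y) s = count (same_comp op y) t.
Proof.
elim=> [a b | a | a b _ -> | a b c _ -> _ ->] //.
elim=> [x z s' | x s' t' _ IH] /=; last by rewrite IH.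
by rewrite same_comp_actr addnCA.
Qed.

Lemma generates_sub s r : gen s -> {subset s <= r} -> gen r.
Proof. by move=> gs sr S rS; apply: gs => x /sr /rS. Qed.

Lemma generates_enum : gen (enum X).
Proof. by move=> S sS _; apply/setP => x; rewrite in_setT sS ?mem_enum. Qed.

Definition comps_ge K (t : seq X) := forall y, K <= count (same_comp op y) t.

Lemma comps_ge_le K K' t : K <= K' -> comps_ge K' t -> comps_ge K t.
Proof. by move=> KK' tK' y; apply: leq_trans KK' (tK' y). Qed.

Lemma comps_ge_catr K w t : comps_ge K t -> comps_ge K (w ++ t).
Proof. by move=> tK y; rewrite count_cat (leq_trans (tK y)) ?leq_addl. Qed.

Lemma comps_ge_braid_cat K t w s : be t (w ++ s) -> comps_ge (size w + K) t -> comps_ge K s.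
Proof.
move=> tws tK y; rewrite -(leq_add2l (size w)) (leq_trans (tK y)) //.
by rewrite (braid_count y tws) count_cat leq_add2r count_size.
Qed.

Lemma comps_ge_nseq_enum k : comps_ge k (flatten (nseq k (enum X))).
Proof.
elim: k => // k IHk y; rewrite /= count_cat -add1n leq_add ?IHk //.
by rewrite -has_count; apply/hasP; exists y; rewrite ?mem_enum ?same_comp_refl.
Qed.

Lemma in_Sstar_catl N w u : in_Sstar op N u -> in_Sstar op N (w ++ u).
Proof.
move=> [u_gt0 [uN gu]]; split; first by rewrite size_cat addn_gt0 u_gt0 orbT.
split; first exact: comps_ge_catr.
by apply: (generates_sub (r := w ++ u) gu) => x xu; rewrite mem_cat xu orbT.
Qed.

Definition front (t : seq X) : {set X} :=
  [set x | `[< exists s, be t (x :: s) /\ gen s >]].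

Lemma frontP t x : reflect (exists s, be t (x :: s) /\ gen s) (x \in front t).
Proof. by rewrite inE; apply: asboolP. Qed.

Lemma front_braid s t : be s t -> front s = front t.
Proof.
move=> st; apply/setP => x; apply/frontP/frontP => -[r [xr gr]]; exists r; split => //.
  exact: braid_trans (braid_sym st) xr.
exact: braid_trans st xr.
Qed.

Lemma front_sub t w s : be t (w ++ s) -> gen s -> front s \subset front t.
Proof.
move=> tws gs; apply/subsetP => x /frontP [r [sr gr]]; apply/frontP.
exists (map (op^~ x) w ++ r); split.
  exact: braid_trans tws (braid_trans (braid_catl w sr) (braid_move_left w x r)).
by apply: (generates_sub (r := _ ++ r) gr) => a ar; rewrite mem_cat ar orbT.
Qed.

Lemma braid_conj_to_front A f M z :
  be (A ++ f :: map (op^~ f) M ++ [:: z])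
     (op f z :: map (op^~ (op f z)) (A ++ M ++ [:: z])).
Proof.
have fMz : be (f :: map (op^~ f) M ++ [:: z]) (M ++ [:: z; op f z]).
  apply: braid_trans (braid_sym (braid_move_left M f [:: z])) _.
  exact: braid_catl (braid_swap _ _ [::]).
apply: braid_trans (braid_catl A fMz) _.
by have := braid_move_left (A ++ M ++ [:: z]) (op f z) [::]; rewrite cats0 -!catA.
Qed.

Hypothesis act_bij : forall y, bijective (op^~ y).
Hypothesis act_dist : forall x y z, op (op z x) y = op (op z y) (op x y).

Lemma act_inj y : injective (op^~ y).
Proof. exact: bij_inj. Qed.

Lemma map_act_onto y s : exists s', s = map (op^~ y) s'.
Proof.
have [g _ gK] := act_bij y; exists (map g s).
by rewrite -map_comp map_id_in // => x _ /=; rewrite gK.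
Qed.

Lemma generates_act y s : gen s -> gen (map (op^~ y) s).
Proof.
move=> gs S sS S_op; apply/setP => x; rewrite in_setT.
have [g _ gK] := act_bij y.
suff /setP /(_ (g x)) : [set a | op a y \in S] = [set: X] by rewrite !inE gK.
apply: gs => [a as_ | a b]; first by rewrite inE sS ?map_f.
by rewrite !inE act_dist; apply: S_op.
Qed.

Lemma front_act A f E z Q : gen (A ++ f :: E ++ z :: Q) -> f \in A ->
  op f z \in front (A ++ f :: E ++ z :: Q).
Proof.
move=> gR fA; have [Q' defQ] := map_act_onto z Q; have [M EQ'] := map_act_onto f (E ++ Q').
apply/frontP; exists (map (op^~ (op f z)) (A ++ M ++ [:: z])); split.
  apply: braid_trans (braid_conj_to_front A f M z); rewrite -EQ' -catA defQ.
  apply/braid_catl/braid_cons/braid_catl.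
  by have := braid_move_left Q' z [::]; rewrite cats0 => /braid_sym.
apply: generates_act => S sS S_op.
have fS : f \in S by apply: sS; rewrite mem_cat fA.
have zS : z \in S by apply: sS; rewrite !mem_cat mem_seq1 eqxx !orbT.
have EQ'S : {subset E ++ Q' <= S}.
  by rewrite EQ' => _ /mapP [m mM ->]; apply: S_op fS; apply: sS; rewrite !mem_cat mM orbT.
apply: (gR S _ S_op) => x; rewrite defQ !(mem_cat, inE).
case/or4P => [xA | /eqP-> | xE | /orP [/eqP-> | /mapP [q qQ' ->]]] //.
- by apply: sS; rewrite mem_cat xA.
- by apply: EQ'S; rewrite mem_cat xE.
- by apply: S_op zS; apply: EQ'S; rewrite mem_cat qQ' orbT.
Qed.

Lemma act_stable_eq (F : {set X}) y :
  {in F, forall f, op f y \in F} -> (op^~ y) @: F = F.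
Proof.
move=> Fy; apply/eqP; rewrite eqEcard card_imset ?leqnn ?andbT; last exact: act_inj.
by apply/subsetP => _ /imsetP [f fF ->]; apply: Fy.
Qed.

Lemma act_stable_mem (F : {set X}) y f : {in F, forall f, op f y \in F} ->
  (op f y \in F) = (f \in F).
Proof. by move=> Fy; rewrite -{1}(act_stable_eq Fy) mem_imset //; apply: act_inj. Qed.

Lemma act_stable_generates (F : {set X}) s : gen s ->
  (forall y, y \in s -> {in F, forall f, op f y \in F}) ->
  forall y, {in F, forall f, op f y \in F}.
Proof.
move=> gs sF; pose Y := [set y | [forall f in F, op f y \in F]].
have YT : Y = [set: X].
  apply: gs => [y ys | a b]; first by rewrite inE; apply/forall_inP; apply: sF.
  rewrite !inE => /forall_inP Fa /forall_inP Fb; apply/forall_inP => f.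
  rewrite -{1}(act_stable_eq Fb) => /imsetP [c cF ->].
  by rewrite -act_dist; apply/Fb/Fa.
by move=> y; have := in_setT y; rewrite -YT inE => /forall_inP.
Qed.

Lemma act_stable_same_comp (F : {set X}) x y :
  (forall y, {in F, forall f, op f y \in F}) -> same_comp op x y -> (x \in F) = (y \in F).
Proof.
by move=> FP; apply: closed_connect => a b /existsP [z /orP [] /eqP ->]; rewrite act_stable_mem.
Qed.

Lemma front_act_stable t s : gen s ->
  be t (enum (front t) ++ enum (front t) ++ s) ->
  forall y, {in front t, forall f, op f y \in front t}.
Proof.
move=> gs ts; set e := enum (front t) in ts.
apply: (act_stable_generates gs) => y ys f fF; rewrite (front_braid ts).
have [s1 [s2 defs]] := mem_split ys.
have [e1 [e2 defe]] : exists e1 e2, e = e1 ++ f :: e2 by apply: mem_split; rewrite mem_enum.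
have defR : e ++ e ++ s = (e ++ e1) ++ f :: (e2 ++ s1) ++ y :: s2.
  by rewrite defs {2}defe -!catA.
rewrite defR; apply: front_act; last by rewrite mem_cat mem_enum fF.
by rewrite -defR; apply: (generates_sub (r := _ ++ _) gs) => a as_; rewrite !mem_cat as_ !orbT.
Qed.

Lemma front_meets_comp t x : gen t -> comps_ge (2 * #|X|).+1 t ->
  exists2 v, same_comp op x v & v \in front t.
Proof.
move=> gt /(_ x) /count_mem_pigeonhole [v xv v_thrice].
have [t1 [t' [defs t'_twice]]] := count_mem_split v_thrice.
have [t2 [t'' [defs' t''_once]]] := count_mem_split t'_twice.
have [t3 [t4 [defs'' _]]] := count_mem_split t''_once.
have {}defs : t = (t1 ++ v :: t2) ++ v :: t3 ++ v :: t4 by rewrite defs defs' defs'' -catA.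
exists (op v v); first by rewrite same_comp_actr.
by rewrite defs in gt *; apply: front_act gt _; rewrite mem_cat mem_head orbT.
Qed.

Lemma front_full t s : gen t -> comps_ge (2 * #|X|).+1 t -> gen s ->
  be t (enum (front t) ++ enum (front t) ++ s) -> front t = [set: X].
Proof.
move=> gt tK gs ts; apply/setP => x; rewrite in_setT.
have [v xv vF] := front_meets_comp x gt tK.
by rewrite (act_stable_same_comp (front_act_stable gs ts) xv).
Qed.

Lemma front_prefix t K : gen t ->
  (forall w s, size w < K -> be t (w ++ s) -> gen s -> front t \subset front s) ->
  forall w, size w <= K -> {subset w <= front t} -> exists2 s, be t (w ++ s) & gen s.
Proof.
move=> gt frontK; elim/last_ind => [|w f IHw]; first by exists t; [exact: braid_refl|].
rewrite size_rcons => wK wF.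
have [s tws gs] : exists2 s, be t (w ++ s) & gen s.
  by apply: IHw (ltnW wK) _ => x xw; apply: wF; rewrite mem_rcons inE xw orbT.
have /frontP [s' [ss' gs']] : f \in front s.
  by apply: (subsetP (frontK _ _ wK tws gs)); apply: wF; rewrite mem_rcons mem_head.
exists s' => //; rewrite -cats1 -catA; exact: braid_trans tws (braid_catl w ss').
Qed.

Lemma front_card_ge j t : j <= #|X| -> gen t ->
  comps_ge ((2 * #|X|).+1 + j * (2 * #|X|)) t -> j <= #|front t|.
Proof.
elim: j t => // j IHj t jX gt tK; rewrite leqNgt ltnS; apply/negP => small.
have suffix_front w s : size w < 2 * #|X| -> be t (w ++ s) -> gen s -> front t \subset front s.
  move=> wK tws gs.
  have sK : comps_ge ((2 * #|X|).+1 + j * (2 * #|X|)) s.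
    by apply: comps_ge_braid_cat tws _; apply: comps_ge_le tK; rewrite mulSn; lia.
  have /eqP -> // : front s == front t.
  by rewrite eqEcard (front_sub tws gs) (leq_trans small (IHj s (ltnW jX) gs sK)).
set e := enum (front t).
have [s ts gs] : exists2 s, be t ((e ++ e) ++ s) & gen s.
  apply: (front_prefix gt suffix_front) => [|x]; last by rewrite !mem_cat mem_enum orbb.
  by rewrite size_cat -cardE addnn -mul2n leq_mul2l max_card.
rewrite -catA in ts; move: small; rewrite (front_full gt _ gs ts) ?cardsT.
  by rewrite leqNgt jX.
by apply: comps_ge_le tK; rewrite leq_addr.
Qed.

(* [(2 * #|X|).+1] gives the pigeonhole in [front_meets_comp]; each of the at most #|X|
   steps of [front_card_ge] strips a prefix shorter than [2 * #|X|]. *)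
Definition front_bound := (2 * #|X|).+1 + #|X| * (2 * #|X|).

Lemma front_setT t : gen t -> comps_ge front_bound t -> front t = [set: X].
Proof. by move=> gt tK; apply/eqP; rewrite eqEcard subsetT cardsT front_card_ge. Qed.

Definition orbit_rep l (a : l.-tuple X) : l.-tuple X :=
  odflt a [pick b : l.-tuple X | `[< be a b >]].

Lemma braid_orbit_rep l (a : l.-tuple X) : be a (orbit_rep a).
Proof. by rewrite /orbit_rep; case: pickP => [b /asboolP | _] //; apply: braid_refl. Qed.

Lemma orbit_rep_braid l (a b : l.-tuple X) : be a b -> orbit_rep a = orbit_rep b.
Proof.
move=> ab.
have same_orbit : (fun c : l.-tuple X => `[< be a c >]) =1 (fun c => `[< be b c >]).
  move=> c; apply/asboolP/asboolP; first exact: braid_trans (braid_sym ab).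
  exact: braid_trans ab.
rewrite /orbit_rep (eq_pick same_orbit); case: pickP => // none.
by have /asboolP := none b; case; apply: braid_refl.
Qed.

Definition count_vec (s : seq X) : {ffun X -> nat} :=
  [ffun y => count (same_comp op y) s].

Lemma size_count_vec s t : count_vec s = count_vec t -> size s = size t.
Proof.
move=> /ffunP st; rewrite !(size_sum_roots _ connect_sym_rack_step).
by apply: eq_bigr => r _; have := st r; rewrite !ffunE.
Qed.

Lemma count_vec_consK x s t :
  (count_vec (x :: s) == count_vec (x :: t)) = (count_vec s == count_vec t).
Proof.
apply/eqP/eqP => /ffunP st; apply/ffunP => y; have := st y; rewrite !ffunE /=.
  exact: addnI.
by move->.
Qed.

Definition gen_tuples l c : {set l.-tuple X} :=
  [set t : l.-tuple X | `[< gen t >] && (count_vec t == c)].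

Definition orbits l c := [set orbit_rep t | t in gen_tuples l c].

Definition norbits (u : seq X) := #|orbits (size u) (count_vec u)|.

Lemma norbits_count_vec u v : count_vec u = count_vec v -> norbits u = norbits v.
Proof. by move=> uv; rewrite /norbits (size_count_vec uv) uv. Qed.

Lemma cons_orbits_onto u x : comps_ge front_bound u ->
  orbits (size u).+1 (count_vec (x :: u)) \subset
  [set orbit_rep (cons_tuple x r) | r in orbits (size u) (count_vec u)].
Proof.
move=> uK; apply/subsetP => _ /imsetP [t /[!inE] /andP [/asboolP gt ct] ->].
have tK : comps_ge front_bound t.
  move=> y; have /ffunP /(_ y) /[!ffunE] -> := eqP ct.
  exact: (comps_ge_catr [:: x] uK).
have /frontP [s [ts gs]] : x \in front t by rewrite front_setT.
have sz : size s == size u by have := braid_size ts; rewrite size_tuple => -[->].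
have sE : Tuple sz \in gen_tuples (size u) (count_vec u).
  rewrite inE -(count_vec_consK x) -(eqP ct); apply/andP; split; first exact/asboolP.
  by apply/eqP/ffunP => y; rewrite !ffunE (braid_count y ts).
apply/imsetP; exists (orbit_rep (Tuple sz)); first exact: imset_f.
apply: orbit_rep_braid; apply: braid_trans ts _; apply: braid_cons.
exact: (braid_orbit_rep (Tuple sz)).
Qed.

Lemma norbits_cons u x : comps_ge front_bound u -> norbits (x :: u) <= norbits u.
Proof.
move=> uK; apply: leq_trans (subset_leq_card (cons_orbits_onto x uK)) _.
exact: leq_imset_card.
Qed.

Lemma braid_cons_inj u v x : comps_ge front_bound u -> norbits (x :: u) = norbits u ->
  gen u -> gen v -> be (x :: u) (x :: v) -> be u v.
Proof.
move=> uK eq_n gu gv xuv.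
have sz : size v == size u by have /= [->] := braid_size xuv.
have uE : in_tuple u \in gen_tuples (size u) (count_vec u).
  by rewrite inE eqxx andbT; apply/asboolP.
have vE : Tuple sz \in gen_tuples (size u) (count_vec u).
  rewrite inE -(count_vec_consK x); apply/andP; split; first exact/asboolP.
  by apply/eqP/ffunP => y; rewrite !ffunE (braid_count y xuv).
have /imset_injP cons_inj :
    #|[set orbit_rep (cons_tuple x r) | r in orbits (size u) (count_vec u)]|
      == #|orbits (size u) (count_vec u)|.
  rewrite eqn_leq leq_imset_card -[#|orbits _ _|]/(norbits u) -eq_n.
  exact: subset_leq_card (cons_orbits_onto x uK).
have eq_rep : orbit_rep (in_tuple u) = orbit_rep (Tuple sz).
  apply: cons_inj; rewrite ?imset_f //.
  apply: orbit_rep_braid; apply: braid_trans (braid_cons x (braid_sym (braid_orbit_rep _))) _.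
  exact: braid_trans xuv (braid_cons x (braid_orbit_rep (Tuple sz))).
apply: braid_trans (braid_orbit_rep (in_tuple u)) _; rewrite eq_rep.
exact: braid_sym (braid_orbit_rep (Tuple sz)).
Qed.

Lemma count_vec_extend a b :
  (forall y, count (same_comp op y) a <= count (same_comp op y) b) ->
  exists w, count_vec (w ++ a) = count_vec b.
Proof.
have [d] := ubnP (\sum_y (count (same_comp op y) b - count (same_comp op y) a)).
elim: d a => // d IHd a lt_d ab.
have [/existsP [y lt_y] | /existsPn eq_ab] :=
  boolP [exists y, count (same_comp op y) a < count (same_comp op y) b]; last first.
  exists [::]; apply/ffunP => z; rewrite !ffunE; apply/eqP.
  by rewrite eqn_leq ab leqNgt eq_ab.
have yab z : count (same_comp op z) (y :: a) <= count (same_comp op z) b.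
  rewrite /=; have [zy | _] := boolP (same_comp op z y); last exact: ab.
  by rewrite !(count_same_comp _ zy).
have [|w wE] := IHd (y :: a) _ yab; last by exists (w ++ [:: y]); rewrite -catA.
rewrite -ltnS (leq_trans _ lt_d) // ltnS (bigD1 y) //= [Y in _ < Y](bigD1 y) //=.
rewrite -addSn leq_add //; first by rewrite same_comp_refl add1n subnS ltn_predL subn_gt0.
by apply: leq_sum => z _; rewrite leq_sub2l // leq_addl.
Qed.

Lemma norbits_cat w u : comps_ge front_bound u -> norbits (w ++ u) <= norbits u.
Proof.
move=> uK; elim: w => //= x w IHw.
exact: leq_trans (norbits_cons x (comps_ge_catr w uK)) IHw.
Qed.

Lemma norbits_dominated a b : comps_ge front_bound a ->
  (forall y, count (same_comp op y) a <= count (same_comp op y) b) ->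
  norbits b <= norbits a.
Proof.
by move=> aK /count_vec_extend [w wE]; rewrite -(norbits_count_vec wE) norbits_cat.
Qed.

Lemma eventually_braid_cons_inj : exists N0, forall N, N0 <= N ->
  forall x u v, in_Sstar op N u -> in_Sstar op N v -> be (x :: u) (x :: v) -> be u v.
Proof.
pose good n := `[< exists u, gen u /\ comps_ge front_bound u /\ norbits u = n >].
have good_ex : exists n, good n.
  pose u1 := flatten (nseq front_bound.+1 (enum X)).
  exists (norbits u1); apply/asboolP; exists u1; split.
    by apply: (generates_sub (r := u1) generates_enum) => y y_enum; rewrite /= mem_cat y_enum.
  by split=> //; apply: comps_ge_catr; apply: comps_ge_nseq_enum.
have [_ /asboolP [u0 [gu0 [u0K <-]]] min_u0] := ex_minnP good_ex.
exists (front_bound + size u0) => N u0N x u v [_ [uN gu]] [_ [_ gv]] xuv.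
have uK : comps_ge front_bound u.
  by apply: comps_ge_le uN; apply: leq_trans u0N; apply: leq_addr.
apply: (braid_cons_inj uK _ gu gv xuv); apply/eqP; rewrite eqn_leq norbits_cons //=.
apply: leq_trans (norbits_dominated u0K _) _.
  move=> y; rewrite (leq_trans (count_size _ _)) // (leq_trans _ (uN y)) //.
  by rewrite (leq_trans _ u0N) ?leq_addl.
apply: min_u0; apply/asboolP; exists (x :: u); split.
  by apply: (generates_sub (r := x :: u) gu) => y yu; rewrite inE yu orbT.
by split=> //; apply: (comps_ge_catr [:: x] uK).
Qed.

End RackBraids.

Theorem corollary4p23 (X : finType) (op : X -> X -> X)
  (Hrack : is_rack op) :
  exists N0 : nat, forall N : nat, N0 <= N ->
    forall w : seq X, 0 < size w ->
    (forall u : seq X, in_Sstar op N u -> in_Sstar op N (w ++ u)) /\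
    (forall u v : seq X, in_Sstar op N u -> in_Sstar op N v ->
       braid_equiv op (w ++ u) (w ++ v) -> braid_equiv op u v).
Proof.
have [act_bij act_dist] := Hrack.
have [N0 cons_inj] := eventually_braid_cons_inj act_bij act_dist.
exists N0 => N N0N w _; split=> [u | u v uN vN]; first exact: in_Sstar_catl.
elim: w => // x w IHw /(cons_inj N N0N x _ _ (in_Sstar_catl w uN) (in_Sstar_catl w vN)).
exact: IHw.
Qed.
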